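(* Let $k\ge2$ be an integer and $\lambda$ a real number with $0<\lambda<\frac{2}{k+1}$. Then the Poisson distribution of order $k$ with parameter $\lambda$ has the unique mode $0$, i.e. $f_k(0;\lambda)>f_k(n;\lambda)$ for every integer $n\ge1$.
   Context: For an integer $k\ge1$ and a real $\lambda>0$, the Poisson distribution of order $k$ with parameter $\lambda$ is the distribution on $\{0,1,2,\dots\}$ with probability mass function $$f_k(n;\lambda)=e^{-k\lambda}\sum_{\substack{n_1,\dots,n_k\ge 0\\ n_1+2n_2+\dots+kn_k=n}}\frac{\lambda^{n_1+\dots+n_k}}{n_1!\cdots n_k!},\qquad n=0,1,2,\dots$$ A mode is any $n$ at which $f_k(n;\lambda)$ attains its global maximum over $n\ge0$. *)

From mathcomp Require Import all_boot all_order all_algebra.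
From mathcomp Require Import all_classical all_reals all_analysis.
Set Implicit Arguments. Unset Strict Implicit. Unset Printing Implicit Defensive.
Import Order.TTheory GRing.Theory Num.Theory.
Local Open Scope ring_scope.

(* The tuple (n_1,...,n_k) is encoded as m : {ffun 'I_k -> 'I_n.+1}
   with n_j = m (j-1) (each n_j <= n necessarily, so nothing is lost). *)
Definition poisson_order_pmf (R : realType) (k : nat) (lam : R) (n : nat) : R :=
  expR (- (k%:R * lam)) *
  \sum_(m : {ffun 'I_k -> 'I_n.+1} |
          (\sum_(j < k) (j.+1 * m j)%N)%N == n)
     (lam ^+ (\sum_(j < k) (m j : nat))%N /
      (\prod_(j < k) ((m j : nat)`!)%:R)).

From mathcomp Require Import all_boot all_order all_algebra.
From mathcomp Require Import all_classical all_reals all_analysis.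
From mathcomp Require Import ring lra zify.
Import Order.TTheory GRing.Theory Num.Theory.
Set Implicit Arguments. Unset Strict Implicit. Unset Printing Implicit Defensive.
Local Open Scope ring_scope.

(* f_k(n; lam) = e^{-k lam} p_n, where p_n is the coefficient of X^n in
   G = prod_{j=1..k} exp(lam X^j); truncating each exponential series at
   degree < N changes no coefficient below N.  The identity
   X G' = (sum_j j lam X^j) G, which survives truncation modulo X^N, yields
   the recurrence m p_m = lam sum_{j <= min(k,m)} j p_{m-j} with p_0 = 1.
   By strong induction every p_m is at most 1, so
   m p_m <= lam min(k,m) (min(k,m)+1) / 2 <= lam m (k+1) / 2 < m,
   i.e. p_m < 1 = p_0 for m >= 1. *)

Section OrderGeneratingPolynomial.
Variable R : numFieldType.
Implicit Types (lam : R) (k N d a m : nat).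

Definition exp_coef lam a : R := lam ^+ a / a`!%:R.

Lemma exp_coefS lam a : exp_coef lam a.+1 * a.+1%:R = lam * exp_coef lam a.
Proof.
rewrite /exp_coef factS natrM exprS.
have fact_neq0 : a`!%:R != 0 :> R by rewrite pnatr_eq0 -lt0n fact_gt0.
by field; rewrite fact_neq0 addrC natr1 pnatr_eq0.
Qed.

Definition trunc_expX lam N d : {poly R} :=
  \sum_(a < N) exp_coef lam a *: 'X^(d * a).

Lemma trunc_expX_deriv lam N d :
  'X * (trunc_expX lam N d)^`() =
    (lam * d%:R) *: ('X^d * trunc_expX lam N d)
    - (exp_coef lam N * (d * N)%:R) *: 'X^(d * N).
Proof.
pose term a := (exp_coef lam a * (d * a)%:R) *: ('X^(d * a) : {poly R}).
have lhsE : 'X * (trunc_expX lam N d)^`() = \sum_(a < N) term a.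
  rewrite raddf_sum mulr_sumr; apply: eq_bigr => a _.
  rewrite /= derivZ derivXn -scalerAr /term.
  case: (d * a)%N => [|e]; first by rewrite mulr0 scaler0 mulr0 scale0r.
  by rewrite succnK mulr_natr mulrnAr -exprS -scalerMnr scalerMnl.
have shiftE : \sum_(a < N.+1) term a = \sum_(a < N) term a.+1.
  by rewrite big_ord_recl /term muln0 mulr0 scale0r add0r.
apply/eqP; rewrite lhsE eq_sym subr_eq -(big_ord_recr N term) /= shiftE.
rewrite mulr_sumr scaler_sumr; apply/eqP; apply: eq_bigr => a _.
rewrite /term -scalerAr scalerA -exprD -mulnS natrM [in RHS]mulrCA exp_coefS.
by congr (_ *: _); ring.
Qed.

Definition order_gf lam k N : {poly R} := \prod_(j < k) trunc_expX lam N j.+1.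

Definition order_rate lam k : {poly R} :=
  \sum_(j < k) (lam * j.+1%:R) *: 'X^(j.+1).

Lemma order_gf_coefE lam k N n :
  \sum_(m : {ffun 'I_k -> 'I_N} | (\sum_(j < k) (j.+1 * m j)%N)%N == n)
     (lam ^+ (\sum_(j < k) (m j : nat))%N / (\prod_(j < k) ((m j : nat)`!)%:R))
  = (order_gf lam k N)`_n.
Proof.
rewrite /order_gf /trunc_expX bigA_distr_bigA /= coef_sum big_mkcond /=.
apply: eq_bigr => m _.
rewrite scaler_prod prodrXr coefZ coefXn eq_sym.
case: eqP => _; last by rewrite mulr0.
by rewrite mulr1 /exp_coef prodf_div -prodrXr.
Qed.

Lemma order_gf_coef0 lam k N : (0 < N)%N -> (order_gf lam k N)`_0 = 1.
Proof.
case: N => // N _; elim: k => [|k IHk]; first by rewrite /order_gf big_ord0 coef1.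
rewrite /order_gf big_ord_recr /= coef0M IHk mul1r coef_sum big_ord_recl /=.
rewrite big1 => [|a _]; last by rewrite coefZ coefXn mulr0.
by rewrite muln0 coefZ coef1 /exp_coef expr0 fact0 divr1 mulr1 addr0.
Qed.

Lemma order_gf_deriv_mod lam k N :
  'X^N %| 'X * (order_gf lam k N)^`() - order_rate lam k * order_gf lam k N.
Proof.
elim: k => [|k IHk].
  by rewrite /order_gf /order_rate !big_ord0 derivC mulr0 mul0r subrr dvdp0.
rewrite /order_gf /order_rate !big_ord_recr /= -/(order_gf lam k N) -/(order_rate lam k).
set G := order_gf lam k N; set Q := trunc_expX lam N k.+1; set L := order_rate lam k.
set l := (lam * k.+1%:R) *: ('X^(k.+1) : {poly R}).
have -> : 'X * (G * Q)^`() - (L + l) * (G * Q) =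
          ('X * G^`() - L * G) * Q + G * ('X * Q^`() - l * Q).
  by rewrite derivM; ring.
apply: dvdp_add; first exact: dvdp_mulr.
apply: dvdp_mull; rewrite trunc_expX_deriv /l -scalerAl addrAC subrr add0r.
rewrite dvdpNr -mul_polyC; apply/dvdp_mull/dvdp_exp2l; exact: leq_pmull.
Qed.

Lemma order_gf_coef_rec lam k N m : (0 < m < N)%N ->
  m%:R * (order_gf lam k N)`_m =
    \sum_(j < k | (j < m)%N) lam * j.+1%:R * (order_gf lam k N)`_(m - j.+1).
Proof.
case/andP=> m_gt0 m_ltN; have /dvdpP[q qE] := order_gf_deriv_mod lam k N.
have /eqP : (q * 'X^N)`_m = 0 by rewrite coefMXn m_ltN.
rewrite -qE coefB subr_eq0 coefXM gtn_eqF // coef_deriv prednK // mulr_natl.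
move/eqP->; rewrite /order_rate mulr_suml coef_sum [RHS]big_mkcond /=.
apply: eq_bigr => j _; rewrite -scalerAl coefZ coefXnM ltnS leqNgt.
by case: (j < m)%N; rewrite ?mulr0.
Qed.

End OrderGeneratingPolynomial.

Lemma double_sum_succ_lt k m :
  (2 * \sum_(j < k | j < m) j.+1 = minn k m * (minn k m).+1)%N.
Proof.
elim: k => [|k IHk]; first by rewrite big_ord0 min0n.
rewrite big_mkcond big_ord_recr /= -big_mkcond mulnDr IHk.
case: ltnP => [k_lt_m | m_le_k].
  by rewrite (minn_idPl k_lt_m); nia.
by rewrite (minn_idPr (leqW m_le_k)) addn0.
Qed.

Section CoefficientBound.
Variables (R : realFieldType) (lam : R) (k N : nat).
Hypotheses (lam_ge0 : 0 <= lam) (rate_lt2 : lam * k.+1%:R < 2).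

Lemma order_gf_coef_lt1 m : (0 < m < N)%N -> (order_gf lam k N)`_m < 1.
Proof.
elim/ltn_ind: m => m IHm /andP[m_gt0 m_ltN].
set p := order_gf lam k N.
have p_le1 i : (i < m)%N -> p`_i <= 1.
  case: i => [|i] i_ltm; first by rewrite order_gf_coef0 //; lia.
  by apply/ltW/IHm => //; lia.
set S := (\sum_(j < k | j < m) j.+1)%N.
have rec_le : m%:R * p`_m <= lam * S%:R.
  rewrite order_gf_coef_rec ?m_gt0 // /S natr_sum mulr_sumr.
  apply: ler_sum => j j_ltm; rewrite -[leRHS]mulr1 ler_wpM2l ?p_le1 //; last by lia.
  by rewrite mulr_ge0.
have S_le : (2 * S <= m * k.+1)%N.
  by rewrite double_sum_succ_lt leq_mul ?geq_minr // ltnS geq_minl.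
have m_pos : 0 < m%:R :> R by rewrite ltr0n.
rewrite -(ltr_pM2l m_pos) mulr1.
have : lam * (2 * S)%:R <= lam * (m * k.+1)%:R by rewrite ler_wpM2l // ler_nat.
have : m%:R * (lam * k.+1%:R) < m%:R * 2 by rewrite ltr_pM2l.
rewrite !natrM; lra.
Qed.

End CoefficientBound.

Theorem mainTheorem3 (R : realType) (k : nat) (lam : R) :
  (2 <= k)%N -> 0 < lam -> lam < 2 / (k.+1)%:R ->
  forall n : nat, (1 <= n)%N ->
    poisson_order_pmf k lam n < poisson_order_pmf k lam 0.
Proof.
(* The bound holds for every k. *)
move=> _ lam_gt0 lam_lt n n_gt0.
have rate_lt2 : lam * k.+1%:R < 2 by rewrite -ltr_pdivlMr ?ltr0n.
rewrite /poisson_order_pmf !order_gf_coefE order_gf_coef0 // mulr1.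
rewrite -[ltRHS]mulr1 ltr_pM2l ?expR_gt0 //.
by apply: order_gf_coef_lt1 => //; [exact: ltW | rewrite n_gt0 ltnSn].
Qed.
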